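(* Let $n\ge 2$ and $r\ge 1$, and let $d\ge 1$ be the integer with $\binom{n+d-2}{d-1}<r\le\binom{n+d-1}{d}$. Let $L_r^n\subset\mathbb{A}^n$ be the union of $r$ lines through the origin whose corresponding points in $\mathbb{P}^{n-1}$ are in uniform position. Then \[\delta(L_r^n)=dr-\binom{n+d-1}{d-1}.\]
   Context: The ground field $\k$ is algebraically closed of characteristic $0$. For a reduced curve singularity $(C,0)$ with local ring $\mathcal{O}$ and normalisation $\overline{\mathcal{O}}$, $\delta=\dim_\k\overline{\mathcal{O}}/\mathcal{O}$. A set $\Gamma$ of $r$ points in $\mathbb{P}^{n-1}$ is in general position if for every $\ell\ge1$ it imposes $\min(r,\binom{n+\ell-1}{\ell})$ independent conditions on forms of degree $\ell$; it is in uniform position if every subset of $\Gamma$ is in general position. A union of lines through the origin in $\mathbb{A}^n$ is called in general/uniform position if the corresponding point set in $\mathbb{P}^{n-1}$ is. $L_r^n$ denotes the cone over such an $r$-point set, i.e. the union of the $r$ corresponding lines through $0\in\mathbb{A}^n$. *)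

From HB Require Import structures.
From mathcomp Require Import all_boot all_order all_algebra.
From mathcomp Require Import mpoly.
Set Implicit Arguments. Unset Strict Implicit. Unset Printing Implicit Defensive.
Import GRing.Theory.
Local Open Scope ring_scope.

(* A form of degree l in n variables: every monomial of p has total degree l
   (the zero polynomial counts as a form of every degree). *)
Definition is_form (K : fieldType) (n l : nat) (p : {mpoly K[n]}) : bool :=
  all (fun m : 'X_{1..n} => mdeg m == l) (msupp p).

Definition eval_on (K : fieldType) (n r : nat) (pts : 'I_r -> 'I_n -> K)
    (S : {set 'I_r}) (f : {mpoly K[n]}) : 'rV[K]_r :=
  \row_i (if i \in S then f.@[pts i] else 0).

(* The points pts_i (i in S) impose exactly c independent conditions on forms of
   degree l: the image of the evaluation map (forms of degree l) -> K^S has dimension c. *)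
Definition imposes_conditions (K : fieldType) (n r : nat) (pts : 'I_r -> 'I_n -> K)
    (S : {set 'I_r}) (l c : nat) : Prop :=
  exists fs : 'I_c -> {mpoly K[n]},
    (forall j, is_form l (fs j)) /\
    row_free (\matrix_j eval_on pts S (fs j)) /\
    (forall f, is_form l f -> (eval_on pts S f <= \matrix_j eval_on pts S (fs j))%MS).

Definition distinct_proj_points (K : fieldType) (n r : nat) (pts : 'I_r -> 'I_n -> K) : Prop :=
  (forall i, exists k, pts i k != 0) /\
  (forall i j, i != j -> ~ exists lam : K, forall k, pts j k = lam * pts i k).

Definition general_position_sub (K : fieldType) (n r : nat) (pts : 'I_r -> 'I_n -> K)
    (S : {set 'I_r}) : Prop :=
  forall l : nat, (1 <= l)%N ->
    imposes_conditions pts S l (minn #|S| 'C(n + l - 1, l)).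

Definition uniform_position (K : fieldType) (n r : nat) (pts : 'I_r -> 'I_n -> K) : Prop :=
  forall S : {set 'I_r}, general_position_sub pts S.

(* The normalisation map of the cone L over the points: the coordinate ring
   K[x_1..x_n]/I(L) maps into its normalisation prod_{i<r} K[t], a polynomial f
   going to (f(t * pts_i))_i. *)
Definition norm_map (K : fieldType) (n r : nat) (pts : 'I_r -> 'I_n -> K)
    (f : {mpoly K[n]}) (i : 'I_r) : {poly K} :=
  mmap (fun c : K => c%:P) (fun k : 'I_n => pts i k *: 'X) f.

(* delta(L) = m : the cokernel of the normalisation map has K-dimension m, i.e.
   there are m vectors forming a basis of prod_i K[t] modulo the image. *)
Definition delta_eq (K : fieldType) (n r : nat) (pts : 'I_r -> 'I_n -> K) (m : nat) : Prop :=
  exists v : 'I_m -> 'I_r -> {poly K},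
    (forall w : 'I_r -> {poly K}, exists (c : 'I_m -> K) (f : {mpoly K[n]}),
        forall i, w i = norm_map pts f i + \sum_(j < m) c j *: v j i) /\
    (forall (c : 'I_m -> K) (f : {mpoly K[n]}),
        (forall i, \sum_(j < m) c j *: v j i = norm_map pts f i) -> forall j, c j = 0).

(* The normalisation map is graded: the degree-[l] coefficients of the images of
   [f] at the [r] lines are the values at the points of the degree-[l] part of [f].
   Hence the image of the normalisation map consists of the families whose
   degree-[l] coefficient vector lies, for every [l], in the space [V_l] of value
   vectors of forms of degree [l], and the cokernel is the direct sum of the
   [K^r / V_l].  The dimension of [V_l] is the Hilbert function of the points,
   which in general position is [min(r, C(n-1+l, l))]; by the choice of [d] it is
   [C(n-1+l, l)] for [l < d] and [r] for [l >= d], so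
   [delta = sum_(l < d) (r - C(n-1+l, l)) = d r - C(n+d-1, d-1)] by the
   hockey-stick identity. *)

From HB Require Import structures.
From mathcomp Require Import all_boot all_order all_algebra.
From mathcomp Require Import mpoly.
From mathcomp Require Import zify.
Set Implicit Arguments. Unset Strict Implicit. Unset Printing Implicit Defensive.
Import GRing.Theory.
Local Open Scope ring_scope.

Lemma sum_tagnat (V : nmodType) m (p : 'I_m -> nat) (F : 'I_(\sum_i p i) -> V) :
  \sum_j F j = \sum_i \sum_(k < p i) F (tagnat.Rank i k).
Proof.
rewrite sig_big_dep (reindex (@tagnat.rank _ p)) /=; last exact: tagnat.rank_bij_on.
by apply: eq_bigr => t _; rewrite tagnat.rankE.
Qed.

Section ComplementBase.
Variables (F : fieldType) (m n : nat) (A : 'M[F]_(m, n)).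

Lemma compl_base_decomposition k (x : 'M_(k, n)) :
  exists y : 'M_(k, \rank A^C), (x - y *m row_base A^C <= A)%MS.
Proof.
have : (x <= row_base A^C + A)%MS.
  apply: submx_full; rewrite /row_full (adds_eqmx (eq_row_base _) (eqmx_refl A)) addsmxC.
  exact: addsmx_compl_full.
case/sub_addsmxP=> u ->; exists u.1.
by rewrite addrC addKr submxMl.
Qed.

Lemma compl_base_sub_eq0 k (y : 'M_(k, \rank A^C)) :
  (y *m row_base A^C <= A)%MS -> y = 0.
Proof.
move=> sA; have sAc : (y *m row_base A^C <= A^C)%MS.
  by rewrite -(eq_row_base A^C)%MS submxMl.
have : (y *m row_base A^C <= A :&: A^C)%MS by rewrite sub_capmx sA.
rewrite capmx_compl submx0 -(mul0mx _ (row_base A^C)%MS) => /eqP.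
exact: (row_free_inj (row_base_free _)).
Qed.
End ComplementBase.

Lemma leq_bin_diag k a b : (a <= b)%N -> ('C(k + a, a) <= 'C(k + b, b))%N.
Proof.
have binC x : 'C(k + x, k) = 'C(k + x, x) by rewrite -bin_sub ?leq_addr // addKn.
by move=> hab; rewrite -!binC leq_bin2l // leq_add2l.
Qed.

Lemma sum_bin_diag k d : (\sum_(l < d.+1) 'C(k + l, l) = 'C(k + d.+1, d))%N.
Proof.
elim: d => [|d IH]; first by rewrite big_ord1 !bin0.
by rewrite big_ord_recr /= IH [(k + d.+2)%N]addnS binS addnC.
Qed.

Lemma sum_sub_bin_diag k r d : (0 < d)%N -> ('C(k + d.-1, d.-1) <= r)%N ->
  (\sum_(l < d) (r - 'C(k + l, l)))%:Z = (d * r)%:Z - ('C(k + d, d.-1))%:Z.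
Proof.
case: d => // d _ bin_le_r.
have le_r (l : 'I_d.+1) : ('C(k + l, l) <= r)%N.
  by apply: leq_trans bin_le_r; rewrite leq_bin_diag // -ltnS.
have sum_le : (\sum_(l < d.+1) 'C(k + l, l) <= d.+1 * r)%N.
  apply: (@leq_trans (\sum_(l < d.+1) r)); first by apply: leq_sum => l _.
  by rewrite sum_nat_const card_ord.
rewrite sumnB => [|l _]; last exact: le_r.
by rewrite sum_nat_const card_ord subzn // -sum_bin_diag.
Qed.

Section Evaluation.
Variables (K : fieldType) (n r : nat) (pts : 'I_r -> 'I_n -> K).

Definition ev (f : {mpoly K[n]}) : 'rV[K]_r := \row_i f.@[pts i].

Lemma ev_is_linear : linear ev.
Proof. by move=> c f g; apply/rowP => i; rewrite !mxE mevalD mevalZ. Qed.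

HB.instance Definition _ :=
  GRing.isLinear.Build K {mpoly K[n]} 'rV[K]_r _ ev ev_is_linear.

Lemma eval_onT : eval_on pts setT =1 ev.
Proof. by move=> f; apply/rowP => i; rewrite !mxE in_setT. Qed.

(* The forms of degree [l] are spanned by the monomials of degree [l]; [pihomog]
   sends the other monomials of degree at most [l] to [0]. *)
Definition ev_forms (l : nat) : 'M[K]_r :=
  (\sum_(m : 'X_{1..n < l.+1}) <<ev (pihomog mdeg l 'X_[m])>>)%MS.

Lemma msize_dhomog l (g : {mpoly K[n]}) : g \is l.-homog -> (msize g <= l.+1)%N.
Proof. by move=> /dhomogP hg; rewrite msizeE; apply/bigmax_leqP_seq => m /hg ->. Qed.

Lemma ev_formsP l x :
  reflect (exists2 g, g \is l.-homog & ev g = x) (x <= ev_forms l)%MS.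
Proof.
apply: (iffP idP) => [|[g hg <-]].
  case/sub_sums_genmxP => u ->.
  exists (\sum_m u m 0 0 *: pihomog mdeg l 'X_[m]).
    by apply: rpred_sum => m _; apply/rpredZ/pihomogP.
  rewrite linear_sum; apply: eq_bigr => m _.
  by rewrite linearZ /= -mul_scalar_mx -mx11_scalar.
have -> : g = \sum_(m : 'X_{1..n < l.+1}) g@_m *: pihomog mdeg l 'X_[m].
  rewrite -{1}(pihomog_dE hg) {1}(mpolywE (msize_dhomog hg)) linear_sum.
  by apply: eq_bigr => m _; rewrite linearZ.
rewrite linear_sum; apply: summx_sub => m _; rewrite linearZ.
by apply/scalemx_sub/(sumsmx_sup m) => //; rewrite genmxE.
Qed.

Lemma rank_ev_forms l c :
  imposes_conditions pts setT l c -> \rank (ev_forms l) = c.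
Proof.
case=> fs [hform [hfree hspan]].
suff <- : (\matrix_j eval_on pts setT (fs j) :=: ev_forms l)%MS by apply/eqP.
apply/eqmxP/andP; split.
  apply/row_subP => j; rewrite rowK eval_onT.
  by apply/ev_formsP; exists (fs j); rewrite // dhomogE; apply: hform.
apply/rV_subP => x /ev_formsP [g hg <-].
by rewrite -eval_onT hspan // /is_form -dhomogE.
Qed.

Lemma dhomog0_polyC (g : {mpoly K[n]}) : g \is 0.-homog -> g = (g@_0)%:MP.
Proof. by move/msize_dhomog/msize1_polyC. Qed.

Lemma rank_ev_forms0 : (0 < r)%N -> \rank (ev_forms 0) = 1%N.
Proof.
move=> r_gt0; have evC c : ev c%:MP = c *: ev 1.
  by apply/rowP => i; rewrite !mxE mevalC meval1 mulr1.
suff -> : (ev_forms 0 :=: ev 1)%MS.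
  rewrite rank_rV; case: eqP => // /rowP /(_ (Ordinal r_gt0)).
  by rewrite !mxE meval1 => /eqP; rewrite oner_eq0.
apply/eqmxP/andP; split; last by apply/ev_formsP; exists 1; rewrite ?dhomog1.
apply/rV_subP => x /ev_formsP [g /dhomog0_polyC -> <-].
by rewrite evC scalemx_sub.
Qed.

Lemma norm_map_homog l f i : f \is l.-homog ->
  norm_map pts f i = f.@[pts i] *: 'X^l.
Proof.
move=> /dhomogP hf; rewrite /norm_map /mmap mevalE scaler_suml big_seq [RHS]big_seq.
apply: eq_bigr => m /hf <-; rewrite /mmap1.
rewrite (eq_bigr (fun j => pts i j ^+ m j *: 'X ^+ m j)); last first.
  by move=> j _; rewrite (exprZn (A := {poly K})).
by rewrite scaler_prod mul_polyC scalerA prodrXr -mdegE.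
Qed.

Lemma norm_map_sum (I : Type) (s : seq I) (P : pred I) (F : I -> {mpoly K[n]}) i :
  norm_map pts (\sum_(j <- s | P j) F j) i = \sum_(j <- s | P j) norm_map pts (F j) i.
Proof. exact: raddf_sum. Qed.

Lemma coef_norm_map f i k : (norm_map pts f i)`_k = (pihomog mdeg k f).@[pts i].
Proof.
have f_size : (mmeasure mdeg f <= maxn (msize f) k.+1)%N by rewrite leq_maxl.
have k_lt : (k < maxn (msize f) k.+1)%N by rewrite leq_maxr.
rewrite {1}(pihomog_partitionE f_size) norm_map_sum.
under eq_bigr => j _ do rewrite (norm_map_homog i (pihomogP _ _ _)).
by rewrite -(poly_def _ (fun j => (pihomog mdeg j f).@[pts i])) coef_poly k_lt.
Qed.

Definition coefrow (u : 'I_r -> {poly K}) (k : nat) : 'rV[K]_r := \row_i (u i)`_k.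

Lemma coefrowB (u v : 'I_r -> {poly K}) k :
  coefrow (fun i => u i - v i) k = coefrow u k - coefrow v k.
Proof. by apply/rowP => i; rewrite !mxE coefB. Qed.

Lemma coefrow_norm_map f k : coefrow (norm_map pts f) k = ev (pihomog mdeg k f).
Proof. by apply/rowP => i; rewrite !mxE coef_norm_map. Qed.

Lemma norm_map_imageP (u : 'I_r -> {poly K}) :
  (exists f, forall i, u i = norm_map pts f i) <->
  (forall k, (coefrow u k <= ev_forms k)%MS).
Proof.
split=> [[f uE] k|u_sub].
  have -> : coefrow u k = coefrow (norm_map pts f) k by apply/rowP => i; rewrite !mxE uE.
  by rewrite coefrow_norm_map; apply/ev_formsP; exists (pihomog mdeg k f); rewrite ?pihomogP.
pose N := (\max_i size (u i))%N.
have /fin_all_exists [g gP] : forall k : 'I_N,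
    exists g, g \is (k : nat).-homog /\ ev g = coefrow u k.
  by move=> k; have /ev_formsP [g] := u_sub k; exists g.
exists (\sum_k g k) => i; rewrite norm_map_sum.
have gE k : norm_map pts (g k) i = (u i)`_k *: 'X^k.
  by have [/(norm_map_homog i) -> /rowP /(_ i)] := gP k; rewrite !mxE => ->.
rewrite (eq_bigr _ (fun k _ => gE k)) -(poly_def N (fun k => (u i)`_k)).
apply/polyP => k; rewrite coef_poly; case: ltnP => // N_le.
by rewrite nth_default // (leq_trans _ N_le) // (leq_bigmax i).
Qed.
End Evaluation.

Section Cokernel.
Variables (K : fieldType) (n r d : nat) (pts : 'I_r -> 'I_n -> K).

Local Notation V l := (ev_forms pts l).
Local Notation defect l := (\rank (V l)^C)%MS.

Definition cokernel_basis (j : 'I_(\sum_(l < d) defect l)) (i : 'I_r) : {poly K} :=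
  let: existT l k := tagnat.sig j in (row_base (V l)^C)%MS k i *: 'X^l.

Lemma coefrow_cokernel_comb (c : 'I_(\sum_(l < d) defect l) -> K) (l : 'I_d) :
  coefrow (fun i => \sum_j c j *: cokernel_basis j i) l =
  (\row_k c (tagnat.Rank l k)) *m (row_base (V l)^C)%MS.
Proof.
apply/rowP => i; rewrite !mxE sum_tagnat coef_sum (bigD1 l) //= [X in _ + X]big1 ?addr0.
  rewrite coef_sum; apply: eq_bigr => k _.
  by rewrite /cokernel_basis /tagnat.Rank tagnat.rankK /= mxE scalerA coefZ coefXn eqxx mulr1.
move=> l' l'_neq; rewrite coef_sum big1 // => k _.
rewrite /cokernel_basis /tagnat.Rank tagnat.rankK /= scalerA coefZ coefXn.
by case: eqP => [/val_inj l_eq|]; [rewrite l_eq eqxx in l'_neq | rewrite mulr0].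
Qed.

Lemma cokernel_basis_free c f :
  (forall i, \sum_j c j *: cokernel_basis j i = norm_map pts f i) -> forall j, c j = 0.
Proof.
move=> cE j; pose l := tagnat.sig1 j.
have /compl_base_sub_eq0 : (\row_k c (tagnat.Rank l k) *m row_base (V l)^C <= V l)%MS.
  by rewrite -coefrow_cokernel_comb; apply: (norm_map_imageP pts _).1; exists f.
by move/rowP/(_ (tagnat.sig2 j)); rewrite !mxE tagnat.sig2K.
Qed.

Hypothesis ev_forms_full : forall l, (d <= l)%N -> row_full (V l).

Lemma cokernel_basis_span w : exists c f,
  forall i, w i = norm_map pts f i + \sum_j c j *: cokernel_basis j i.
Proof.
have /fin_all_exists [y yP] : forall l : 'I_d, exists y : 'rV_(defect l),
    (coefrow w l - y *m row_base (V l)^C <= V l)%MS.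
  by move=> l; apply: compl_base_decomposition.
pose c j := let: existT l k := tagnat.sig j in y l 0 k.
have cE l : \row_k c (tagnat.Rank l k) = y l.
  by apply/rowP => k; rewrite mxE /c tagnat.rankK.
have [f fE] : exists f, forall i,
    w i - \sum_j c j *: cokernel_basis j i = norm_map pts f i.
  apply/norm_map_imageP => k; have [k_lt|/ev_forms_full/submx_full//] := ltnP k d.
  rewrite coefrowB -[k]/(nat_of_ord (Ordinal k_lt)) coefrow_cokernel_comb cE.
  exact: yP.
by exists c, f => i; rewrite -fE subrK.
Qed.

Lemma delta_eq_ev_forms : delta_eq pts (\sum_(l < d) defect l).
Proof. by exists cokernel_basis; split; [exact: cokernel_basis_span | exact: cokernel_basis_free]. Qed.
End Cokernel.

Theorem mainTheorem1 (K : closedFieldType) (charK0 : [pchar K] =i pred0)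
    (n r d : nat) (hn : (2 <= n)%N) (hr : (1 <= r)%N) (hd : (1 <= d)%N)
    (hlow : ('C(n + d - 2, d - 1) < r)%N) (hup : (r <= 'C(n + d - 1, d))%N)
    (pts : 'I_r -> 'I_n -> K)
    (hdist : distinct_proj_points pts) (hunif : uniform_position pts) :
  exists m : nat, delta_eq pts m /\
    (m%:Z = (d * r)%:Z - ('C(n + d - 1, d - 1))%:Z)%R.
Proof.
have n_pred l : (n + l - 1 = n.-1 + l)%N by lia.
have rank_ev l : \rank (ev_forms pts l) = minn r 'C(n.-1 + l, l).
  case: l => [|l]; first by rewrite rank_ev_forms0 // addn0 bin0; apply/esym/minn_idPr.
  by rewrite (rank_ev_forms (hunif setT l.+1 isT)) cardsT card_ord n_pred.
have full l : (d <= l)%N -> row_full (ev_forms pts l).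
  move=> d_le; rewrite /row_full rank_ev; apply/eqP/minn_idPl.
  by apply: leq_trans hup _; rewrite n_pred leq_bin_diag.
have bin_lt_r : ('C(n.-1 + d.-1, d.-1) < r)%N.
  have -> : (n.-1 + d.-1 = n + d - 2)%N by lia.
  by rewrite -subn1.
exists (\sum_(l < d) \rank (ev_forms pts l)^C%MS)%N; split; first exact: delta_eq_ev_forms.
rewrite (eq_bigr (fun l : 'I_d => r - 'C(n.-1 + l, l))%N) => [|l _]; last first.
  rewrite mxrank_compl rank_ev; congr (_ - _)%N; apply/minn_idPr/ltnW/(leq_ltn_trans _ bin_lt_r).
  by rewrite leq_bin_diag // -ltnS (ltn_predK (ltn_ord l)).
by rewrite sum_sub_bin_diag ?(ltnW bin_lt_r) // n_pred subn1.
Qed.
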